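(* Coefficientwise in $\mathbb{Z}[\![t]\!]$ the following congruences hold: \begin{align*} U(t) &\equiv (1+120 t +96 t^{2} +128 t^{3} ) U(t^2) \pmod{2^{8}},\\ V(t) &\equiv (1+72 t +128 t^{2} +128 t^{3} +64 t^{4} + 128 t^{8} ) U(t^2) \pmod{2^{8}},\\ U(t) &\equiv ( 1+120 t+54 t^{2}+189 t^{3}+135 t^{4} +81 t^{5} +162 t^{6} +81 t^{7} + 162 t^{10})\, U(t^{3}) \pmod{3^{5}},\\ V(t) &\equiv ( 1+111 t+216 t^{2}+162 t^{3}+135 t^{4} + 81 t^{5} +81 t^{7} +162 t^{9} +162 t^{10} )\, U(t^{3}) \pmod{3^{5}} . \end{align*}
   Context: For $r\ge0$ let $u_{r} = \frac{(6r)!}{(3r)!\, r!^{3}}$, $U(t)=\sum_{r\ge0}u_rt^r={}_3F_2(\tfrac16,\tfrac12,\tfrac56;1,1;1728t)$ and $V(t)=\sum_{r\ge0}(6r+1)u_rt^r$. A congruence modulo $N$ of power series means all coefficients of the difference are divisible by $N$. *)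

From mathcomp Require Import all_boot.
Set Implicit Arguments. Unset Strict Implicit. Unset Printing Implicit Defensive.

(* u_r = (6r)! / ((3r)! r!^3), an integer (exact division). *)
Definition u (r : nat) : nat := (6 * r)`! %/ ((3 * r)`! * (r`!) ^ 3).

Definition Ucoef (n : nat) : nat := u n.
Definition Vcoef (n : nat) : nat := (6 * n + 1) * u n.

(* n-th coefficient of P(t) * U(t^k), where P = sum_i p`_i t^i is given by its
   coefficient list p (p`_i = nth 0 p i). *)
Definition polyUk_coef (p : seq nat) (k n : nat) : nat :=
  \sum_(0 <= i < n.+1 | k %| (n - i)) nth 0 p i * u ((n - i) %/ k).

From Stdlib Require Import NArith.
From mathcomp Require Import all_boot.
From mathcomp Require Import ring zify.
Set Implicit Arguments. Unset Strict Implicit. Unset Printing Implicit Defensive.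

(** Write n = p m + j with 0 <= j < p.  Splitting every factorial in
    u_n = (6n)! / ((3n)! n!^3) into a power of p, the factorial of its quotient by p and
    the product of its factors prime to p (a "p-free factorial") yields X u_{pm+j} = R u_m,
    where X is prime to p and X, R are products of p-free factorials and small polynomials
    in m.  These relations give a digit-sum lower bound v for the p-adic valuation of u_m,
    and they turn the coefficient congruence modulo p^K into a congruence modulo p^(K-v)
    between such products.  For q = 2^5 (resp. 3^4) the p-free factorial of q squares to 1
    modulo q, so p-free factorials modulo q have period 2q; as p^(K-v) divides q, the
    reduced congruence only depends on m modulo 2q and is checked by computation over one
    period.  On the right-hand side the terms c u_{m-d} with d >= 2 vanish because 8 | u_x
    (resp. 3 | u_x) for x > 0, while the term with d = 1 is either converted into a
    multiple of u_m through m^3 u_m = 8 (6m-5) (6m-3) (6m-1) u_{m-1} or killed by the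
    valuation bound.  Small n are computed directly. *)

Lemma mulnI_pos k x y : 0 < k -> k * x = k * y -> x = y.
Proof. by move=> k_gt0 /eqP; rewrite eqn_pmul2l // => /eqP. Qed.

Lemma dvdn_fact_add a b : a`! * b`! %| (a + b)`!.
Proof. by rewrite -(bin_fact (leq_addr b a)) addKn dvdn_mull. Qed.

Lemma u_mul_fact r : u r * ((3 * r)`! * r`! ^ 3) = (6 * r)`!.
Proof.
rewrite /u divnK // (_ : 6 * r = 3 * r + 3 * r); last lia.
apply: (dvdn_trans _ (dvdn_fact_add _ _)); rewrite dvdn_pmul2l ?fact_gt0 //.
rewrite (_ : 3 * r = r + (r + r)); last lia.
apply: (dvdn_trans _ (dvdn_fact_add _ _)); rewrite expnS dvdn_pmul2l ?fact_gt0 // -mulnn.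
exact: dvdn_fact_add.
Qed.

Lemma u_succ m : m.+1 ^ 3 * u m.+1 = 8 * (6 * m + 1) * (6 * m + 3) * (6 * m + 5) * u m.
Proof.
have e3 : 3 * m.+1 = 3 * m + 3 by rewrite mulnSr.
have e6 : 6 * m.+1 = 6 * m + 6 by rewrite mulnSr.
apply: (@mulnI_pos ((3 * m.+1)`! * m`! ^ 3)); first by rewrite muln_gt0 expn_gt0 !fact_gt0.
transitivity (u m.+1 * ((3 * m.+1)`! * m.+1`! ^ 3)); first by rewrite e3 !addnS !factS addn0; ring.
by rewrite u_mul_fact e6 e3 !addnS !factS !addn0 -u_mul_fact; ring.
Qed.

Fixpoint pfree_fact (p N : nat) : nat :=
  if N is N'.+1 then (if p %| N'.+1 then 1 else N'.+1) * pfree_fact p N' else 1.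

Lemma fact_pfree_fact p N : 0 < p -> N`! = p ^ (N %/ p) * (N %/ p)`! * pfree_fact p N.
Proof.
move=> p_gt0; elim: N => [|N IHN]; first by rewrite div0n.
rewrite factS divnS // /=; case: ifP => [pN1|_]; last by rewrite add0n IHN; ring.
have -> : N.+1 = p * (N %/ p).+1.
  by rewrite {1}(divn_eq N.+1 p) divnS // pN1 (eqP pN1) addn0 mulnC.
by rewrite add1n expnS factS IHN; ring.
Qed.

Lemma coprime_pfree_fact p N : prime p -> coprime (pfree_fact p N) p.
Proof.
move=> p_pr; elim: N => [|N IHN]; first exact: coprime1n.
rewrite [pfree_fact _ _]/= coprimeMl IHN andbT.
case: ifPn => [_|pN]; first exact: coprime1n.
by rewrite coprime_sym prime_coprime.
Qed.

Lemma pfree_factD p q N : p %| q ->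
  pfree_fact p (N + q) = pfree_fact p N * pfree_fact p q %[mod q].
Proof.
move=> p_q; elim: N => [|N IHN]; first by rewrite mul1n.
rewrite addSn /= -addSn (dvdn_addl _ p_q); case: ifP => _; first by rewrite !mul1n IHN.
by rewrite -mulnA -modnMm IHN modnMm -modnMml modnDr modnMml mulnA.
Qed.

Lemma pfree_fact_period p q N : p %| q -> pfree_fact p q ^ 2 = 1 %[mod q] ->
  pfree_fact p N = pfree_fact p (N %% (2 * q)) %[mod q].
Proof.
move=> p_q sqr1; rewrite {1}(divn_eq N (2 * q)) addnC.
move: (N %/ (2 * q)) (N %% (2 * q)) => t r; elim: t => [|t IHt]; first by rewrite addn0.
rewrite (_ : r + t.+1 * (2 * q) = r + t * (2 * q) + q + q); last lia.
rewrite pfree_factD // -modnMml pfree_factD // modnMml -mulnA mulnn.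
by rewrite -modnMmr sqr1 modnMmr muln1.
Qed.

Fixpoint pfree_fact_mod (p q N : nat) : nat :=
  if N is N'.+1 then (if p %| N'.+1 then 1 else N'.+1) * pfree_fact_mod p q N' %% q
  else 1 %% q.

Lemma pfree_fact_modE p q N : pfree_fact_mod p q N = pfree_fact p N %% q.
Proof. by elim: N => [|N IHN] //=; rewrite IHN modnMmr. Qed.

Lemma pfree_fact_sqr_mod p q : pfree_fact_mod p q q ^ 2 %% q = 1 %% q ->
  pfree_fact p q ^ 2 = 1 %[mod q].
Proof. by rewrite pfree_fact_modE modnXm. Qed.

(** Polynomial expressions in a variable [m] and in values [g (a * m + b)]; reflecting them
    lets us compute their residues mod [q] from [m mod 2q] (see [geval_congr]). *)
Inductive gexpr :=
  | GLin of nat & nat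
  | GVal of nat & nat
  | GAdd of gexpr & gexpr
  | GMul of gexpr & gexpr.

Definition gcube (e : gexpr) : gexpr := GMul e (GMul e e).

Fixpoint geval (g : nat -> nat) (m : nat) (e : gexpr) : nat :=
  match e with
  | GLin a b => a * m + b
  | GVal a b => g (a * m + b)
  | GAdd e1 e2 => geval g m e1 + geval g m e2
  | GMul e1 e2 => geval g m e1 * geval g m e2
  end.

Fixpoint geval_mod (q : nat) (g : nat -> nat) (m : nat) (e : gexpr) : nat :=
  match e with
  | GLin a b => (a * m + b) %% q
  | GVal a b => g (a * m + b) %% q
  | GAdd e1 e2 => (geval_mod q g m e1 + geval_mod q g m e2) %% q
  | GMul e1 e2 => (geval_mod q g m e1 * geval_mod q g m e2) %% q
  end.

Fixpoint gshift (e : gexpr) : gexpr :=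
  match e with
  | GLin a b => GLin a (a + b)
  | GVal a b => GVal a (a + b)
  | GAdd e1 e2 => GAdd (gshift e1) (gshift e2)
  | GMul e1 e2 => GMul (gshift e1) (gshift e2)
  end.

Lemma geval_gshift g m e : geval g m (gshift e) = geval g m.+1 e.
Proof.
by elim: e => [a b|a b|e1 IH1 e2 IH2|e1 IH1 e2 IH2] /=; rewrite ?IH1 ?IH2 ?mulnSr ?addnA.
Qed.

Lemma geval_modE q g g' m e : (forall N, g' N = g N %[mod q]) ->
  geval_mod q g' m e = geval g m e %% q.
Proof.
move=> gg'; elim: e => [a b|a b|e1 IH1 e2 IH2|e1 IH1 e2 IH2] //=; rewrite IH1 IH2.
  by rewrite modnDm.
by rewrite modnMm.
Qed.

Lemma geval_congr q g m m' e :
  (forall a b, g (a * m + b) = g (a * m' + b) %[mod q]) -> m = m' %[mod q] ->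
  geval g m e = geval g m' e %[mod q].
Proof.
move=> gmm' mm'; elim: e => [a b|a b|e1 IH1 e2 IH2|e1 IH1 e2 IH2] //=.
- by rewrite -modnDml -modnMmr mm' modnMmr modnDml.
- by rewrite -modnDm IH1 IH2 modnDm.
- by rewrite -modnMm IH1 IH2 modnMm.
Qed.

Definition digit_lhs (p j : nat) : gexpr := GMul (GVal (3 * p) (3 * j)) (gcube (GVal p j)).
Definition digit_rhs (p j : nat) (c : gexpr) : gexpr := GMul c (GVal (6 * p) (6 * j)).

Lemma u_digit_fact p m j : 0 < p -> j < p ->
  p ^ (3 * j %/ p) * (3 * m + 3 * j %/ p)`! * (6 * m)`!
    * (geval (pfree_fact p) m (digit_lhs p j) * u (p * m + j))
  = p ^ (6 * j %/ p) * (6 * m + 6 * j %/ p)`! * (3 * m)`!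
    * (pfree_fact p (6 * p * m + 6 * j) * u m).
Proof.
move=> p_gt0 j_lt_p.
have div_digit c : (c * p * m + c * j) %/ p = c * m + c * j %/ p by rewrite mulnAC divnMDl.
have f1 := fact_pfree_fact (p * m + j) p_gt0.
rewrite mulnC divnMDl // divn_small // addn0 mulnC in f1.
have f3 := fact_pfree_fact (3 * p * m + 3 * j) p_gt0; rewrite div_digit in f3.
have f6 := fact_pfree_fact (6 * p * m + 6 * j) p_gt0; rewrite div_digit in f6.
have un : u (p * m + j) * ((3 * p * m + 3 * j)`! * (p * m + j)`! ^ 3) = (6 * p * m + 6 * j)`!.
  by rewrite -!mulnA -!mulnDr u_mul_fact.
have powm c d : p ^ (c * m + d) = (p ^ m) ^ c * p ^ d by rewrite expnD (mulnC c) expnM.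
rewrite powm in f3; rewrite powm in f6.
apply: (@mulnI_pos ((p ^ m) ^ 6 * m`! ^ 3)); first by rewrite muln_gt0 !expn_gt0 fact_gt0 p_gt0.
transitivity ((6 * m)`! * (u (p * m + j) * ((3 * p * m + 3 * j)`! * (p * m + j)`! ^ 3))).
  by rewrite /= f3 f1; ring.
by rewrite un f6 -(u_mul_fact m); ring.
Qed.

Lemma u_digit_ratio p j m a b c : 0 < p -> j < p -> 6 * j %/ p = a -> 3 * j %/ p = b ->
  p ^ b * (3 * m + b)`! * (6 * m)`! * geval (pfree_fact p) m c
    = p ^ a * (6 * m + a)`! * (3 * m)`! ->
  geval (pfree_fact p) m (digit_lhs p j) * u (p * m + j)
    = geval (pfree_fact p) m (digit_rhs p j c) * u m.
Proof.
move=> p_gt0 j_lt_p <- <- fact_c.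
apply: (@mulnI_pos (p ^ (3 * j %/ p) * (3 * m + 3 * j %/ p)`! * (6 * m)`!)).
  by rewrite !muln_gt0 expn_gt0 p_gt0 !fact_gt0.
by rewrite u_digit_fact // -fact_c /=; ring.
Qed.

Lemma coprime_digit_lhs p j m : prime p -> coprime (geval (pfree_fact p) m (digit_lhs p j)) p.
Proof. by move=> p_pr; rewrite /= !coprimeMl !coprime_pfree_fact. Qed.

Fixpoint digits_weight (w : nat -> nat) (p k m : nat) : nat :=
  if k is k'.+1 then w (m %% p) + digits_weight w p k' (m %/ p) else 0.

(** A lower bound for the [p]-adic valuation of [u m] (see [dvdn_u_vbound]) that only
    depends on [m mod p ^ k] and on whether [p ^ k <= m]. *)
Definition vbound (w : nat -> nat) (p base k m : nat) : nat :=
  digits_weight w p k m + base * (p ^ k <= m).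

Lemma digits_weight_mod w p k m : 0 < p ->
  digits_weight w p k m = digits_weight w p k (m %% p ^ k).
Proof.
move=> p_gt0; elim: k m => [|k IHk] m //=.
rewrite (@modn_dvdm (p ^ k.+1)) ?dvdn_exp //; congr (_ + _).
by rewrite divn_modl ?dvdn_exp // expnS mulKn // -IHk.
Qed.

Lemma vbound_mono w p base k m m' : 0 < p -> m' = m %[mod p ^ k] -> m <= m' ->
  vbound w p base k m <= vbound w p base k m'.
Proof.
move=> p_gt0 mm' le_mm'; rewrite /vbound digits_weight_mod // -mm' -digits_weight_mod //.
rewrite leq_add2l; have [le_pk_m|] := leqP (p ^ k) m; last by rewrite muln0.
by rewrite (leq_trans le_pk_m le_mm').
Qed.

Section Valuation.

Variables (p base : nat) (w : nat -> nat).
Hypothesis p_prime : prime p.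
Hypothesis u_digit_dvd : forall m j, j < p ->
  exists X, coprime X p /\ p ^ w j * u m %| X * u (p * m + j).
Hypothesis w_ge_base : forall j, 0 < j < p -> base <= w j.

Lemma dvdn_u_digit m j e : j < p -> p ^ e %| p ^ w j * u m -> p ^ e %| u (p * m + j).
Proof.
move=> j_lt_p dvd_e; have [X [coX dvdX]] := u_digit_dvd m j_lt_p.
by rewrite -(@Gauss_dvdr _ X) ?(dvdn_trans dvd_e) // coprimeXl // coprime_sym.
Qed.

Lemma dvdn_u_pos m : 0 < m -> p ^ base %| u m.
Proof.
have p_gt0 := prime_gt0 p_prime.
elim/ltn_ind: m => m IHm m_gt0; rewrite (divn_eq m p) mulnC.
apply: dvdn_u_digit; first by rewrite ltn_mod.
have [j0|j_gt0] := posnP (m %% p).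
  apply/dvdn_mull/IHm; first by rewrite ltn_Pdiv ?prime_gt1.
  by rewrite divn_gt0 // (dvdn_leq m_gt0) // /dvdn j0.
by apply/dvdn_mulr; rewrite dvdn_exp2l // w_ge_base // j_gt0 ltn_mod.
Qed.

Lemma dvdn_u_vbound k m : p ^ vbound w p base k m %| u m.
Proof.
have p_gt0 := prime_gt0 p_prime.
elim: k m => [|k IHk] m.
  rewrite /vbound /= expn0; case: posnP => [->|m_gt0]; first by rewrite muln0.
  by rewrite muln1 dvdn_u_pos.
rewrite /vbound /= -addnA expnSr -leq_divRL //.
rewrite [X in u X](divn_eq m p) [_ * p]mulnC; apply: dvdn_u_digit; first by rewrite ltn_mod.
rewrite expnD; exact: dvdn_mul (dvdnn _) (IHk _).
Qed.

End Valuation.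

Lemma modn_mulI_coprime X a b d : coprime X d -> X * a = X * b %[mod d] -> a = b %[mod d].
Proof.
move=> coXd; wlog le_ba : a b / b <= a => [hwlog|].
  have [le_ba|/ltnW le_ab] := leqP b a; first exact: hwlog.
  by move=> /esym/(hwlog _ _ le_ab)/esym.
move/eqP; rewrite eqn_mod_dvd ?leq_mul2l ?le_ba ?orbT // -mulnBr Gauss_dvdr.
  by rewrite -eqn_mod_dvd // => /eqP.
by rewrite coprime_sym.
Qed.

Lemma dvdn_mul_exp_sub p K e c : p ^ (K - e) %| c -> p ^ K %| c * p ^ e.
Proof.
move=> dvd_c; apply: dvdn_trans (dvdn_mul dvd_c (dvdnn _)).
by rewrite -expnD dvdn_exp2l // addnC -leq_subLR.
Qed.

Lemma eqn_mod_of_ratio p K v X B C lhs rhs y : 0 < p -> coprime X p -> p ^ v %| y ->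
  B = C %[mod p ^ (K - v)] -> X * lhs = B * y -> X * rhs = C * y -> lhs = rhs %[mod p ^ K].
Proof.
move=> p_gt0 coXp pv_y BC Xlhs Xrhs.
apply: (@modn_mulI_coprime X); first by rewrite coprimeXr.
rewrite Xlhs Xrhs; have [le_Kv|lt_vK] := leqP K v.
  have pK_y := dvdn_trans (dvdn_exp2l p le_Kv) pv_y.
  by rewrite (eqP (dvdn_mull B pK_y)) (eqP (dvdn_mull C pK_y)).
case/dvdnP: pv_y => y' ->; rewrite -(subnK (ltnW lt_vK)) expnD !mulnA.
by rewrite -!muln_modl -modnMml BC modnMml.
Qed.

Lemma all_nth_drop (T : eqType) (x0 : T) (a : pred T) s n i :
  a x0 -> all a (drop n s) -> n <= i -> a (nth x0 s i).
Proof.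
move=> a_x0 /allP a_drop le_ni.
have [lt_is|le_si] := ltnP i (size s); last by rewrite nth_default.
rewrite -(subnKC le_ni) -nth_drop; apply/a_drop/mem_nth; rewrite size_drop; lia.
Qed.

Lemma sum_dvdn_sub_last (F : nat -> nat) p a b : a <= b -> b - a < p ->
  \sum_(a <= i < b.+1 | p %| b - i) F i = F b.
Proof.
move=> le_ab lt_bap; rewrite big_mkcond big_nat_recr //= subnn dvdn0 big_nat_cond big1 //.
move=> i /andP[/andP[le_ai lt_ib] _]; rewrite ifF //; apply/negbTE/negP => /dvdn_leq.
rewrite subn_gt0 lt_ib => /(_ isT); lia.
Qed.

Lemma sum_dvdn_sub_digits (F : nat -> nat) p M j : j < p ->
  \sum_(0 <= i < (p * M + j).+1 | p %| p * M + j - i) F i = \sum_(0 <= d < M.+1) F (p * d + j).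
Proof.
move=> lt_jp; elim: M => [|M IHM].
  by rewrite muln0 add0n sum_dvdn_sub_last ?subn0 // big_nat1 muln0.
rewrite big_nat_recr //= -IHM (@big_cat_nat _ _ _ (p * M + j).+1) //=; last lia.
rewrite sum_dvdn_sub_last; [congr (_ + _)|lia|lia].
rewrite big_nat_cond [RHS]big_nat_cond; apply: eq_bigl => i.
rewrite leq0n /=; case: ltnP => //= lt_i.
by rewrite mulnS -addnA -addnBA ?dvdn_addr // -ltnS.
Qed.

Lemma polyUk_coef_digits P p M j : j < p ->
  polyUk_coef P p (p * M + j) = \sum_(0 <= d < M.+1) nth 0 P (p * d + j) * u (M - d).
Proof.
move=> lt_jp; rewrite /polyUk_coef sum_dvdn_sub_digits //.
apply: eq_big_nat => d /andP[_ le_dM]; rewrite subnDr -mulnBr mulKn //; lia.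
Qed.

Lemma polyUk_coef_head P p M j d e : j < p -> size P <= p * M.+1 ->
  (forall i, 2 * p <= i -> d %| nth 0 P i * p ^ e) -> (forall x, 0 < x -> p ^ e %| u x) ->
  polyUk_coef P p (p * M.+1 + j) = nth 0 P j * u M.+1 + nth 0 P (p + j) * u M %[mod d].
Proof.
move=> lt_jp sizeP dvd_tail dvd_u.
have tail : d %| \sum_(0 <= i < M) nth 0 P (p * i.+2 + j) * u (M.+1 - i.+2).
  rewrite big_nat_cond dvdn_sum // => i /andP[/andP[_ lt_iM] _].
  have [i_last|i_not_last] := eqVneq (M.+1 - i.+2) 0.
    by rewrite nth_default ?dvdn0 // (leq_trans sizeP) //; nia.
  apply: dvdn_trans (dvd_tail _ _) (dvdn_mul (dvdnn _) (dvd_u _ _)); [nia | by rewrite lt0n].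
rewrite polyUk_coef_digits // !big_nat_recl // addnA -modnDmr (eqP tail) addn0.
by rewrite muln0 muln1 add0n subn0 subSS subn0.
Qed.

Section Congruence.

(** [p ^ K] is the target modulus and [q] the modulus for p-free factorials; [rho * eZ] is
    the factor 8 (6m+1) (6m+3) (6m+5) of [u_succ], split so that [eZ] is prime to [p] where
    it is used; the finite check covers [m] in [lo, lo + 2q). *)
Variables (p K q k base rho lo : nat) (w : nat -> nat) (coef : nat -> gexpr) (eZ : gexpr).
Hypothesis p_prime : prime p.
Hypothesis q_gt0 : 0 < q.
Hypothesis p_dvd_q : p %| q.
Hypothesis pk_dvd_2q : p ^ k %| 2 * q.
Hypothesis pfree_q_sqr : pfree_fact p q ^ 2 = 1 %[mod q].
Hypothesis u_digit : forall j m, j < p ->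
  geval (pfree_fact p) m (digit_lhs p j) * u (p * m + j)
    = geval (pfree_fact p) m (digit_rhs p j (coef j)) * u m.
Hypothesis coef_dvd : forall j m, j < p -> p ^ w j %| geval (pfree_fact p) m (coef j).
Hypothesis w_ge_base : forall j, 0 < j < p -> base <= w j.
Hypothesis rho_eZ : forall m,
  rho * geval (pfree_fact p) m eZ = 8 * (6 * m + 1) * (6 * m + 3) * (6 * m + 5).

Local Notation pf := (pfree_fact p).

Lemma u_digit_dvd m j : j < p -> exists X, coprime X p /\ p ^ w j * u m %| X * u (p * m + j).
Proof.
move=> lt_jp; exists (geval pf m (digit_lhs p j)); split; first exact: coprime_digit_lhs.
by rewrite u_digit //= -mulnA dvdn_mul ?coef_dvd ?dvdn_mull.
Qed.

Definition pfree_table : seq nat := mkseq (pfree_fact_mod p q) (2 * q).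

(** Soundness only uses [m mod 2q]: [g] reads the p-free factorials mod [q] off one
    period, and [d %| q] makes residues mod [q] determine residues mod [d]. *)
Definition check_at (tbl : seq nat) (m : nat) (eX eB eC : gexpr) : bool :=
  let g N := nth 0 tbl (N %% (2 * q)) in
  let d := p ^ (K - vbound w p base k m.+1) in
  [&& d %| q, ~~ (p %| geval_mod q g m eX) & geval_mod q g m eB == geval_mod q g m eC %[mod d]].

Lemma dvdn_u_window m0 m : m0 <= m -> m = m0 %[mod 2 * q] ->
  p ^ vbound w p base k m0 %| u m.
Proof.
move=> le_m0m mm0; apply: dvdn_trans (dvdn_u_vbound p_prime u_digit_dvd w_ge_base k m).
apply/dvdn_exp2l/vbound_mono => //; first exact: prime_gt0.
by rewrite -(modn_dvdm m pk_dvd_2q) mm0 modn_dvdm.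
Qed.

Lemma congr_of_check_at eX eB eC m0 m lhs rhs :
  check_at pfree_table m0 eX eB eC -> m0 <= m -> m = m0 %[mod 2 * q] ->
  geval pf m eX * lhs = geval pf m eB * u m.+1 -> geval pf m eX * rhs = geval pf m eC * u m.+1 ->
  lhs = rhs %[mod p ^ K].
Proof.
move=> /and3P[dvd_q ndvd_X BC] le_m0m mm0 Xlhs Xrhs.
have q_dvd_2q : q %| 2 * q by apply: dvdn_mull.
have ev e : geval_mod q (fun N => nth 0 pfree_table (N %% (2 * q))) m0 e = geval pf m e %% q.
  rewrite (@geval_modE _ pf) => [|N]; last first.
    by rewrite nth_mkseq ?ltn_pmod ?muln_gt0 // pfree_fact_modE modn_mod -pfree_fact_period.
  apply/esym/geval_congr => [a b|]; last by rewrite -(modn_dvdm m q_dvd_2q) mm0 modn_dvdm.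
  by rewrite pfree_fact_period // -modnDml -modnMmr mm0 modnMmr modnDml -pfree_fact_period.
rewrite !ev in ndvd_X BC; move: BC; rewrite !modn_dvdm // => /eqP BC.
apply: (eqn_mod_of_ratio (prime_gt0 p_prime) _ _ BC Xlhs Xrhs).
  by rewrite coprime_sym prime_coprime // /dvdn -(modn_dvdm _ p_dvd_q).
apply: dvdn_u_window; first exact: le_m0m.
by rewrite -[m.+1]addn1 -[m0.+1]addn1 -modnDml mm0 modnDml.
Qed.

Definition lhs_expr (j : nat) : gexpr := gshift (digit_lhs p j).

Definition main_expr (a j : nat) : gexpr :=
  GMul (GLin (a * p) (a * (p + j) + 1)) (gshift (digit_rhs p j (coef j))).

Lemma lhs_expr_ratio a j m : j < p ->
  geval pf m (lhs_expr j) * ((a * (p * m.+1 + j) + 1) * u (p * m.+1 + j))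
    = geval pf m (main_expr a j) * u m.+1.
Proof.
move=> lt_jp; rewrite /main_expr /lhs_expr; cbn [geval]; rewrite !geval_gshift.
transitivity ((a * (p * m.+1 + j) + 1) * (geval pf m.+1 (digit_lhs p j) * u (p * m.+1 + j))).
  by ring.
by rewrite u_digit //; ring.
Qed.

(** Two ways to handle the term [c1 * u m] of the right-hand side: [check_two] trades it
    for [u m.+1] through [u_succ], [check_one] kills it with the valuation bound. *)
Definition check_two (tbl : seq nat) (a c0 c1 j m : nat) : bool :=
  let eX := GMul (lhs_expr j) eZ in
  check_at tbl m eX (GMul eZ (main_expr a j))
    (GAdd (GMul (GLin 0 c0) eX)
          (GMul (GLin 0 (c1 %/ rho)) (GMul (lhs_expr j) (gcube (GLin 1 1))))).

Definition check_one (tbl : seq nat) (a c0 c1 j m : nat) : bool :=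
  (p ^ (K - vbound w p base k m) %| c1)
  && check_at tbl m (lhs_expr j) (main_expr a j) (GMul (GLin 0 c0) (lhs_expr j)).

Lemma congr_of_check_two a c0 c1 j m0 m : j < p -> rho %| c1 ->
  check_two pfree_table a c0 c1 j m0 -> m0 <= m -> m = m0 %[mod 2 * q] ->
  (a * (p * m.+1 + j) + 1) * u (p * m.+1 + j) = c0 * u m.+1 + c1 * u m %[mod p ^ K].
Proof.
move=> lt_jp rho_c1 check le_m0m mm0; apply: (congr_of_check_at check le_m0m mm0).
  by cbn [geval]; rewrite mulnAC lhs_expr_ratio //; ring.
set c := c1 %/ rho; rewrite -(divnK rho_c1) -/c; cbn [geval gcube].
transitivity (geval pf m (lhs_expr j) * (geval pf m eZ * c0 * u m.+1
  + c * ((rho * geval pf m eZ) * u m))); first by ring.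
by rewrite rho_eZ -u_succ; ring.
Qed.

Lemma congr_of_check_one a c0 c1 j m0 m : j < p ->
  check_one pfree_table a c0 c1 j m0 -> m0 <= m -> m = m0 %[mod 2 * q] ->
  (a * (p * m.+1 + j) + 1) * u (p * m.+1 + j) = c0 * u m.+1 + c1 * u m %[mod p ^ K].
Proof.
move=> lt_jp /andP[c1_dvd check] le_m0m mm0.
have -> : c0 * u m.+1 + c1 * u m = c0 * u m.+1 %[mod p ^ K].
  rewrite -modnDmr (eqP (_ : p ^ K %| c1 * u m)) ?addn0 //.
  exact: dvdn_trans (dvdn_mul_exp_sub c1_dvd) (dvdn_mul (dvdnn c1) (dvdn_u_window le_m0m mm0)).
apply: (congr_of_check_at check le_m0m mm0); first exact: lhs_expr_ratio.
by cbn [geval]; ring.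
Qed.

Definition case_check (a : nat) (P : seq nat) (j : nat) : bool :=
  let tbl := pfree_table in
  let c0 := nth 0 P j in let c1 := nth 0 P (p + j) in
  [&& size P <= p * lo.+1, rho %| c1, all (fun c => p ^ (K - base) %| c) (drop (2 * p) P)
    & all (fun m => check_two tbl a c0 c1 j m || check_one tbl a c0 c1 j m) (iota lo (2 * q))].

Lemma coef_congr_digit a P j m : j < p -> lo <= m -> case_check a P j ->
  (a * (p * m.+1 + j) + 1) * u (p * m.+1 + j) = polyUk_coef P p (p * m.+1 + j) %[mod p ^ K].
Proof.
move=> lt_jp le_lo_m /and4P[sizeP rho_c1 tail /allP window].
have sizeP' : size P <= p * m.+1 by rewrite (leq_trans sizeP) // leq_mul2l ltnS le_lo_m orbT.
have tail' i : 2 * p <= i -> p ^ K %| nth 0 P i * p ^ base.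
  by move=> le_2p_i; exact/dvdn_mul_exp_sub/(all_nth_drop (dvdn0 _) tail le_2p_i).
have dvd_u := @dvdn_u_pos p base w p_prime u_digit_dvd w_ge_base.
rewrite (polyUk_coef_head lt_jp sizeP' tail' dvd_u).
set m0 := lo + (m - lo) %% (2 * q).
have le_m0m : m0 <= m by rewrite -[leqRHS](subnKC le_lo_m) leq_add2l leq_mod.
have mm0 : m = m0 %[mod 2 * q] by rewrite modnDmr subnKC.
have /window/orP[two|one] : m0 \in iota lo (2 * q).
  by rewrite mem_iota leq_addr ltn_add2l ltn_pmod // muln_gt0.
- exact: congr_of_check_two two le_m0m mm0.
- exact: congr_of_check_one one le_m0m mm0.
Qed.

Lemma coef_congr a P n : all (case_check a P) (iota 0 p) -> p * lo.+1 <= n ->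
  (a * n + 1) * u n = polyUk_coef P p n %[mod p ^ K].
Proof.
move=> /allP checks le_n; have p_gt0 := prime_gt0 p_prime.
have lt_m : lo < n %/ p by rewrite leq_divRL // mulnC.
have m_gt0 : 0 < n %/ p := leq_ltn_trans (leq0n lo) lt_m.
have -> : n = p * (n %/ p).-1.+1 + n %% p by rewrite prednK // mulnC -divn_eq.
apply: coef_congr_digit; first by rewrite ltn_pmod.
  by rewrite -ltnS prednK.
by apply: checks; rewrite mem_iota ltn_pmod.
Qed.

End Congruence.

Definition digit_coef2 (j : nat) : gexpr :=
  if j is 0 then GLin 0 1 else GMul (GLin 0 8) (GMul (GLin 6 1) (GLin 6 3)).

Lemma u_digit2 j m : j < 2 ->
  geval (pfree_fact 2) m (digit_lhs 2 j) * u (2 * m + j)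
    = geval (pfree_fact 2) m (digit_rhs 2 j (digit_coef2 j)) * u m.
Proof.
case: j => [|[|//]] _.
  by apply: (@u_digit_ratio _ _ _ 0 0) => //=; rewrite !addn0; ring.
by apply: (@u_digit_ratio _ _ _ 3 1) => //=; rewrite !addnS !factS !addn0; ring.
Qed.

Definition digit_coef3 (j : nat) : gexpr :=
  match j with
  | 0 => GLin 0 1
  | 1 => GMul (GLin 0 6) (GLin 6 1)
  | _ => GMul (GLin 0 108) (GMul (GLin 6 1) (GLin 2 1))
  end.

Lemma u_digit3 j m : j < 3 ->
  geval (pfree_fact 3) m (digit_lhs 3 j) * u (3 * m + j)
    = geval (pfree_fact 3) m (digit_rhs 3 j (digit_coef3 j)) * u m.
Proof.
case: j => [|[|[|//]]] _.
- by apply: (@u_digit_ratio _ _ _ 0 0) => //=; rewrite !addn0; ring.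
- by apply: (@u_digit_ratio _ _ _ 2 1) => //=; rewrite !addnS !factS !addn0; ring.
- by apply: (@u_digit_ratio _ _ _ 4 2) => //=; rewrite !addnS !factS !addn0; ring.
Qed.

(** [u n] in binary arithmetic, through the recurrence [u_succ]: the division is exact. *)
Fixpoint uN (n : nat) : N :=
  if n is n'.+1 then
    let x := N.of_nat n' in
    (8 * (6 * x + 1) * (6 * x + 3) * (6 * x + 5) * uN n' / (x + 1) ^ 3)%num
  else 1%num.

Lemma uN_spec n : uN n = N.of_nat (u n).
Proof.
elim: n => [|n IHn] //; rewrite [uN _]/= IHn.
set x := N.of_nat n.
have -> : (8 * (6 * x + 1) * (6 * x + 3) * (6 * x + 5) * N.of_nat (u n)
    = N.of_nat (u n.+1) * (x + 1) ^ 3)%num.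
  have := u_succ n; nia.
by rewrite N.div_mul //; lia.
Qed.

Lemma N_of_nat_modn a M : 0 < M -> N.of_nat (a %% M) = (N.of_nat a mod N.of_nat M)%num.
Proof.
move=> M_gt0; apply: (N.mod_unique _ _ (N.of_nat (a %/ M))); first lia.
have := divn_eq a M; lia.
Qed.

Definition polyN (P : seq nat) (k n : nat) : N :=
  foldr (fun i acc =>
           if k %| n - i then N.add (N.mul (N.of_nat (nth 0 P i)) (uN ((n - i) %/ k))) acc else acc)
    0%num (iota 0 n.+1).

Lemma polyN_spec P k n : polyN P k n = N.of_nat (polyUk_coef P k n).
Proof.
rewrite /polyN /polyUk_coef /index_iota subn0.
elim: (iota 0 n.+1) => [|i s IHs]; first by rewrite big_nil.
by rewrite big_cons /=; case: ifP => _ //; rewrite IHs uN_spec; lia.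
Qed.

Definition small_check (a : nat) (P : seq nat) (k M n : nat) : bool :=
  (N.of_nat (a * n + 1) * uN n mod N.of_nat M =? polyN P k n mod N.of_nat M)%num.

Lemma coef_congr_small a P k M n : 0 < M -> small_check a P k M n ->
  (a * n + 1) * u n = polyUk_coef P k n %[mod M].
Proof.
move=> M_gt0 /N.eqb_spec; rewrite uN_spec polyN_spec.
have := N_of_nat_modn ((a * n + 1) * u n) M_gt0; have := N_of_nat_modn (polyUk_coef P k n) M_gt0.
lia.
Qed.

Definition step_unit2 : gexpr := GMul (GLin 6 1) (GMul (GLin 6 3) (GLin 6 5)).

(** [(p, K, q, k, base, rho, lo) = (2, 8, 2^5, 6, 3, 8, 4)] *)
Definition case_check2 := case_check 2 8 32 6 3 8 4 (muln 3) digit_coef2 step_unit2.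

Lemma coef_congr2 a P n :
  all (case_check2 a P) (iota 0 2) -> all (small_check a P 2 (2 ^ 8)) (iota 0 10) ->
  (a * n + 1) * u n = polyUk_coef P 2 n %[mod 2 ^ 8].
Proof.
move=> large /allP small; have [lt_n10|le_10n] := ltnP n 10.
  by apply: coef_congr_small => //; apply: small; rewrite mem_iota.
apply: (coef_congr (isT : prime 2) (isT : 0 < 32) (isT : 2 %| 32) (isT : 2 ^ 6 %| 2 * 32)
  (@pfree_fact_sqr_mod 2 32 erefl) u_digit2 _ _ _ large le_10n).
- by case=> [|[|//]] m _ /=; rewrite mul0n add0n ?dvdn_mulr.
- by case=> [|[|]].
- by move=> m /=; ring.
Qed.

Definition step_unit3 : gexpr := GMul (GLin 0 8) (GMul (GLin 6 1) (GMul (GLin 2 1) (GLin 6 5))).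

(** [(p, K, q, k, base, rho, lo) = (3, 5, 3^4, 4, 1, 3, 3)] *)
Definition case_check3 := case_check 3 5 81 4 1 3 3 (nth 0 [:: 0; 1; 3]) digit_coef3 step_unit3.

Lemma coef_congr3 a P n :
  all (case_check3 a P) (iota 0 3) -> all (small_check a P 3 (3 ^ 5)) (iota 0 12) ->
  (a * n + 1) * u n = polyUk_coef P 3 n %[mod 3 ^ 5].
Proof.
move=> large /allP small; have [lt_n12|le_12n] := ltnP n 12.
  by apply: coef_congr_small => //; apply: small; rewrite mem_iota.
apply: (coef_congr (isT : prime 3) (isT : 0 < 81) (isT : 3 %| 81) (isT : 3 ^ 4 %| 2 * 81)
  (@pfree_fact_sqr_mod 3 81 erefl) u_digit3 _ _ _ large le_12n).
- by case=> [|[|[|//]]] m _ /=; rewrite mul0n add0n ?dvdn_mulr.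
- by case=> [|[|[|]]].
- by move=> m /=; ring.
Qed.

Lemma UcoefE n : Ucoef n = (0 * n + 1) * u n.
Proof. by rewrite mul0n mul1n. Qed.

Theorem proposition3p7 :
  (forall n : nat,
     Ucoef n = polyUk_coef [:: 1; 120; 96; 128] 2 n %[mod 2 ^ 8]) /\
  (forall n : nat,
     Vcoef n = polyUk_coef [:: 1; 72; 128; 128; 64; 0; 0; 0; 128] 2 n %[mod 2 ^ 8]) /\
  (forall n : nat,
     Ucoef n = polyUk_coef [:: 1; 120; 54; 189; 135; 81; 162; 81; 0; 0; 162] 3 n
       %[mod 3 ^ 5]) /\
  (forall n : nat,
     Vcoef n = polyUk_coef [:: 1; 111; 216; 162; 135; 81; 0; 81; 0; 162; 162] 3 n
       %[mod 3 ^ 5]).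
Proof.
split; [|split; [|split]] => n; rewrite ?UcoefE.
- by apply: coef_congr2; vm_compute.
- by apply: coef_congr2; vm_compute.
- by apply: coef_congr3; vm_compute.
- by apply: coef_congr3; vm_compute.
Qed.
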